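(* There exists a large set of H-designs LH$(5,4u,4,3)$ for every positive integer $u$.
   Context: An H-design H$(n,g,k,t)$ is a triple $(Q,G,B)$ where $Q$ is a set of $ng$ points, $G$ is a partition of $Q$ into $n$ groups of size $g$, and $B$ is a set of $k$-subsets of $Q$ (blocks) such that each block meets each group in at most one point and any $t$ points from $t$ distinct groups lie in exactly one block. A large set of H-designs LH$(n,g,k,t)$ is a partition of the set of all $k$-subsets of $Q$ meeting each group of $G$ in at most one point into pairwise disjoint block sets, each of which forms (with $Q$ and $G$) an H-design H$(n,g,k,t)$. *)

From mathcomp Require Import all_boot.
Set Implicit Arguments. Unset Strict Implicit. Unset Printing Implicit Defensive.

(* Point set Q = 'I_n * 'I_g : ng points; the group of point x is x.1,
   so G = { {x | x.1 = i} : i < n } is a partition into n groups of size g. *)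
Definition hpoint (n g : nat) := ('I_n * 'I_g)%type.

Definition transverse (n g : nat) (A : {set hpoint n g}) : Prop :=
  forall i : 'I_n, #|[set x in A | x.1 == i]| <= 1.

Definition Hdesign (n g k t : nat) (B : {set {set hpoint n g}}) : Prop :=
  (forall b, b \in B -> #|b| = k /\ transverse b) /\
  (forall S : {set hpoint n g}, #|S| = t -> transverse S ->
     #|[set b in B | S \subset b]| = 1).

Definition transverse_ksets (n g k : nat) : {set {set hpoint n g}} :=
  [set A : {set hpoint n g} | (#|A| == k) &&
     [forall i : 'I_n, #|[set x in A | x.1 == i]| <= 1]].

Definition large_Hset (n g k t : nat) (P : {set {set {set hpoint n g}}}) : Prop :=
  partition P (transverse_ksets n g k) /\ (forall B, B \in P -> @Hdesign n g k t B).

From mathcomp Require Import all_boot.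
Set Implicit Arguments. Unset Strict Implicit. Unset Printing Implicit Defensive.

(* Color the transverse (t+1)-sets; the color classes form an LH(n,g,t+1,t) as
   soon as every transverse t-set extends to exactly one transverse (t+1)-set of
   each color.  For g = 4 and t = 3 an explicit coloring with 8 colors does this:
   a 4-set avoiding group m and meeting group j in residue r_j (a vector of
   GF(2)^2) gets the color c_m + sum_j M_(m,j) r_j in GF(2)^3, and the extension
   property is checked by computation.  For g = 4u write a point of group j as
   4l + r with r < 4 and l < u, and color a 4-set by the base color of its
   residues together with the sum of its levels l modulo u: the base color
   determines the group and residue of the missing point, the sum its level. *)

Section Transversals.

Variables n g : nat.
Implicit Types (A S b : {set hpoint n g}) (p : hpoint n g).

Lemma transverseP A : transverse A <-> {in A &, injective (@fst 'I_n 'I_g)}.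
Proof.
split=> [tA x y xA yA exy | injA i].
  by apply: (card_le1_eqP (tA x.1)); rewrite inE ?xA ?yA -?exy eqxx.
apply/card_le1_eqP => x y; rewrite !inE => /andP [xA /eqP xi] /andP [yA /eqP yi].
by apply: injA; rewrite ?xi ?yi.
Qed.

Lemma transverse_ksetsP k A :
  reflect (#|A| = k /\ transverse A) (A \in transverse_ksets n g k).
Proof.
by rewrite inE; apply: (iffP andP) => [[/eqP ? /forallP] | [-> /forallP]]; split.
Qed.

Lemma notin_groups p S : p.1 \notin fst @: S -> p \notin S.
Proof. by apply: contra => pS; rewrite imset_f. Qed.

Lemma transverse_setU1 p S :
  transverse S -> p.1 \notin fst @: S -> transverse (p |: S).
Proof.
move=> /transverseP injS pS; apply/transverseP => x y.
have notS q : q \in S -> p.1 = q.1 -> False.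
  by move=> qS e; case/negP: pS; rewrite e imset_f.
rewrite !inE => /predU1P [-> | xS] /predU1P [-> | yS] // e.
- by case: (notS y yS e).
- by case: (notS x xS (esym e)).
- exact: injS.
Qed.

Lemma transverse_ksets_setU1 t p S : #|S| = t -> transverse S ->
  p.1 \notin fst @: S -> p |: S \in transverse_ksets n g t.+1.
Proof.
move=> cS tS pS; apply/transverse_ksetsP; split; last exact: transverse_setU1.
by rewrite cardsU1 (notin_groups pS) cS.
Qed.

Lemma transverse_ksets_superset t S b : #|S| = t ->
  b \in transverse_ksets n g t.+1 -> S \subset b ->
  exists2 p, p.1 \notin fst @: S & b = p |: S.
Proof.
move=> cS /transverse_ksetsP [cb /transverseP injb] Sb.
have /cards1P [p bSp] : #|b :\: S| == 1 by rewrite cardsD (setIidPr Sb) cb cS subSnn.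
have /setDP [pb pS] : p \in b :\: S by rewrite bSp set11.
exists p; last by rewrite -bSp -{1}(setID b S) (setIidPr Sb) setUC.
apply/imsetP => -[x xS ex]; case/negP: pS.
by rewrite (injb p x pb (subsetP Sb x xS) ex).
Qed.

End Transversals.

Definition completing n g t (C : eqType) (col : {set hpoint n g} -> C) : Prop :=
  forall A S : {set hpoint n g},
    A \in transverse_ksets n g t.+1 -> #|S| = t -> transverse S ->
    exists! p, p.1 \notin fst @: S /\ col (p |: S) = col A.

Lemma large_Hset_completing n g t (C : eqType) (col : {set hpoint n g} -> C) :
  completing t col ->
  large_Hset t.+1 t (preim_partition col (transverse_ksets n g t.+1)).
Proof.
move=> col_ok; split; first exact: preim_partitionP.
move=> _ /imsetP [A AT ->]; split.
  by move=> b; rewrite inE => /andP [/transverse_ksetsP].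
move=> S cS tS; have [p [[pS cp] p_uniq]] := col_ok A S AT cS tS.
apply/eqP/cards1P; exists (p |: S); apply/setP => b; rewrite 3!inE.
apply/idP/eqP => [/andP [/andP [bT /eqP cb] Sb] | ->].
  have [q qS eb] := transverse_ksets_superset cS bT Sb.
  have cq : col (q |: S) = col A by rewrite -eb cb.
  by rewrite eb (p_uniq q (conj qS cq)).
by rewrite transverse_ksets_setU1 // cp eqxx subsetUr.
Qed.

Lemma addn_mod_inj u L l l' : l < u -> l' < u ->
  (l + L) %% u = (l' + L) %% u -> l = l'.
Proof. by move=> lu l'u /eqP; rewrite eqn_modDr !modn_small // => /eqP. Qed.

Lemma addn_mod_surj u L s : s < u -> exists2 l, l < u & (l + L) %% u = s.
Proof.
move=> su; have u_gt0 : 0 < u by apply: leq_ltn_trans su.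
exists ((s + (u - L %% u)) %% u); first exact: ltn_pmod.
have uL : (u - L %% u + L) %% u = 0.
  by rewrite -modnDmr subnK ?modnn // ltnW // ltn_pmod.
by rewrite modnDml -addnA -modnDmr uL addn0 modn_small.
Qed.

Section Inflation.

Variables (n g u : nat).
Hypothesis g_gt0 : 0 < g.
Implicit Types (A S : {set hpoint n (g * u)}) (x y : hpoint n (g * u)).

Definition base_point x : hpoint n g := (x.1, Ordinal (ltn_pmod x.2 g_gt0)).

Definition level x : nat := x.2 %/ g.

Lemma level_lt x : level x < u.
Proof. by rewrite ltn_divLR // [u * g]mulnC. Qed.

Lemma base_point_level_inj x y :
  base_point x = base_point y -> level x = level y -> x = y.
Proof.
case: x y => [i r] [j s] [-> rs] ls; congr pair; apply: val_inj.
by rewrite /= (divn_eq r g) (divn_eq s g) rs; congr (_ * _ + _).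
Qed.

Lemma exists_base_point_level q l : l < u -> exists x, base_point x = q /\ level x = l.
Proof.
move=> lu; have lt : l * g + q.2 < g * u.
  rewrite [g * u]mulnC; apply: leq_trans (_ : l.+1 * g <= _).
    by rewrite mulSnr ltn_add2l.
  by rewrite leq_pmul2r.
exists (q.1, Ordinal lt); split.
  by case: q lt => i r lt; congr pair; apply: val_inj; rewrite /= modnMDl modn_small.
by rewrite /level /= divnMDl // divn_small // addn0.
Qed.

Lemma groups_base_point S : fst @: (base_point @: S) = fst @: S.
Proof. by rewrite -imset_comp; apply: eq_imset. Qed.

Lemma base_point_transverse S :
  transverse S -> {in S &, injective base_point} /\ transverse (base_point @: S).
Proof.
move=> /transverseP injS.
have inj : {in S &, injective base_point}.
  by move=> x y xS yS /(congr1 fst); apply: injS.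
split=> //; apply/transverseP => _ _ /imsetP [x xS ->] /imsetP [y yS ->] e.
by rewrite (injS x y).
Qed.

Lemma base_point_transverse_ksets k A :
  A \in transverse_ksets n (g * u) k -> base_point @: A \in transverse_ksets n g k.
Proof.
move=> /transverse_ksetsP [cA /base_point_transverse [inj tA]].
by apply/transverse_ksetsP; rewrite card_in_imset.
Qed.

Variables (C : eqType) (col : {set hpoint n g} -> C).

Definition inflate A : C * nat :=
  (col (base_point @: A), (\sum_(x in A) level x) %% u).

Lemma inflate_setU1 x S : x \notin S ->
  inflate (x |: S) =
    (col (base_point x |: base_point @: S), (level x + \sum_(y in S) level y) %% u).
Proof. by move=> xS; rewrite /inflate imsetU1 big_setU1. Qed.

Lemma inflate_completing t : completing t col -> completing t inflate.
Proof.
move=> col_ok A S AT cS tS.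
have u_gt0 : 0 < u.
  have [cA _] := transverse_ksetsP _ _ AT.
  have /card_gt0P [x _] : 0 < #|A| by rewrite cA.
  by have := leq_ltn_trans (leq0n _) (ltn_ord x.2); rewrite muln_gt0 => /andP [].
have [injS tS0] := base_point_transverse tS.
have cS0 : #|base_point @: S| = t by rewrite card_in_imset.
have [p0 [[p0S cp0] p0_uniq]] :=
  col_ok _ _ (base_point_transverse_ksets AT) cS0 tS0.
rewrite groups_base_point in p0S p0_uniq.
have [l lu lL] :=
  addn_mod_surj (\sum_(y in S) level y) (ltn_pmod (\sum_(x in A) level x) u_gt0).
have [p [bp lp]] := exists_base_point_level p0 lu.
exists p; split.
  have pS : p.1 \notin fst @: S by rewrite -[p.1]/(base_point p).1 bp.
  split=> //; rewrite inflate_setU1 ?notin_groups // bp cp0 lp.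
  by rewrite /inflate; congr pair; exact: lL.
move=> q [qS]; rewrite inflate_setU1 ?notin_groups // => -[cq lq].
apply: base_point_level_inj; first by rewrite bp; apply: p0_uniq.
apply: (addn_mod_inj (level_lt p) (level_lt q)).
by rewrite lp; exact: etrans lL (esym lq).
Qed.

End Inflation.

Lemma cards3_set_seq (T : finType) (S : {set T}) :
  #|S| = 3 -> exists x1 x2 x3, uniq [:: x1; x2; x3] /\ S = [set x in [:: x1; x2; x3]].
Proof.
move=> cS; have : size (enum S) = 3 by rewrite -cardE.
case E: (enum S) => [|x1 [|x2 [|x3 []]]] // _.
exists x1, x2, x3; split; first by rewrite -E enum_uniq.
by apply/setP => x; rewrite inE -E mem_enum.
Qed.

Lemma mem_imset_set_seq (T U : finType) (f : T -> U) (s : seq T) y :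
  (y \in f @: [set x in s]) = (y \in map f s).
Proof. by apply/imsetP/mapP => -[x xs ->]; exists x; rewrite ?inE in xs *. Qed.

Lemma exists_unique_card1 (T : finType) (P : pred T) (Q : T -> Prop) :
  (forall x, reflect (Q x) (x \in P)) -> #|P| = 1 -> exists! x, Q x.
Proof.
move=> PQ /eqP /card1P [x Px]; exists x.
by split=> [|y]; [apply/PQ | move/PQ]; rewrite Px inE // => /eqP.
Qed.

Definition coords {n g} (x : hpoint n g) : nat * nat := (x.1 : nat, x.2 : nat).

Definition grid n g : seq (nat * nat) := [seq (i, r) | i <- iota 0 n, r <- iota 0 g].

Lemma perm_coords_grid n g : perm_eq [seq coords x | x <- enum {: hpoint n g}] (grid n g).
Proof.
apply: uniq_perm.
- by rewrite map_inj_uniq ?enum_uniq // => -[i r] [j s] [/ord_inj -> /ord_inj ->].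
- by apply: allpairs_uniq; rewrite ?iota_uniq // => -[? ?] [? ?] _ _ [-> ->].
move=> [i r]; apply/mapP/allpairsP => [[x _ [-> ->]] | [[i' r'] /= [ii rr [-> ->]]]].
  by exists (coords x); rewrite !mem_iota /= !ltn_ord.
rewrite !mem_iota /= in ii rr.
by exists (Ordinal ii, Ordinal rr); rewrite ?mem_enum.
Qed.

Lemma coords_grid n g (x : hpoint n g) : coords x \in grid n g.
Proof. by rewrite -(perm_mem (perm_coords_grid n g)) map_f ?mem_enum. Qed.

Lemma count_grid n g (P : pred (nat * nat)) :
  count P (grid n g) = #|[pred x : hpoint n g | P (coords x)]|.
Proof.
by rewrite -(permP (perm_coords_grid n g)) count_map cardE enumT /enum_mem size_filter.
Qed.

(* Entry j of row k of [form_table m] encodes the k-th row of M_(m,j) as the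
   number w < 4 whose bits give the linear form r |-> w . r on the bits of r;
   row m of [shift_table] is c_m. *)
Definition form_table : seq (seq (seq nat)) :=
  [:: [:: [:: 0; 2; 1; 3; 1]; [:: 0; 1; 1; 1; 0]; [:: 0; 2; 2; 2; 2]];
      [:: [:: 2; 0; 0; 1; 2]; [:: 1; 0; 2; 2; 2]; [:: 2; 0; 3; 0; 1]];
      [:: [:: 2; 0; 0; 1; 2]; [:: 2; 3; 0; 3; 3]; [:: 1; 2; 0; 1; 0]];
      [:: [:: 1; 2; 3; 0; 3]; [:: 3; 3; 2; 0; 1]; [:: 2; 0; 3; 0; 1]];
      [:: [:: 3; 1; 3; 2; 0]; [:: 0; 1; 1; 1; 0]; [:: 1; 2; 0; 1; 0]]].

Definition shift_table : seq (seq nat) :=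
  [:: [:: 0; 0; 0]; [:: 1; 0; 0]; [:: 0; 1; 0]; [:: 0; 0; 1]; [:: 1; 1; 1]].

Definition bit_dot (w r : nat) : nat := odd w * odd r + odd w./2 * odd r./2.

Definition color_bit (m k : nat) (xs : seq (nat * nat)) : bool :=
  odd (nth 0 (nth [::] shift_table m) k +
       sumn [seq bit_dot (nth 0 (nth [::] (nth [::] form_table m) k) x.1) x.2 | x <- xs]).

(* On the coordinates of a transverse 4-set, 10 - (sum of the groups) is the
   group it avoids. *)
Definition pair_color (xs : seq (nat * nat)) : bool * bool * bool :=
  let m := 10 - sumn (unzip1 xs) in (color_bit m 0 xs, color_bit m 1 xs, color_bit m 2 xs).

Definition base_color (A : {set hpoint 5 4}) : bool * bool * bool :=
  pair_color [seq coords x | x <- enum A].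

Lemma pair_color_perm xs ys : perm_eq xs ys -> pair_color xs = pair_color ys.
Proof. by move=> pxy; rewrite /pair_color /color_bit !(perm_sumn (perm_map _ pxy)). Qed.

Lemma base_color_set_seq (s : seq (hpoint 5 4)) :
  uniq s -> base_color [set x in s] = pair_color (map coords s).
Proof.
move=> us; apply/pair_color_perm/perm_map/uniq_perm => // [|x].
  exact: enum_uniq.
by rewrite mem_enum inE.
Qed.

Definition colors : seq (bool * bool * bool) :=
  [seq (ab, c) | ab <- [seq (a, b) | a <- [:: false; true], b <- [:: false; true]],
                 c <- [:: false; true]].

Lemma count_colors c : count_mem c colors = 1.
Proof. by case: c => [[[] []] []]. Qed.

Definition base_check : bool :=
  all (fun x1 => all (fun x2 => all (fun x3 =>
    let s := [:: x1; x2; x3] in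
    uniq (unzip1 s) ==>
    perm_eq [seq pair_color (q :: s) | q <- grid 5 4 & q.1 \notin unzip1 s] colors)
  (grid 5 4)) (grid 5 4)) (grid 5 4).

Lemma base_check_ok : base_check.
Proof. by vm_compute. Qed.

Lemma base_checkP (s : seq (nat * nat)) :
  size s = 3 -> all (mem (grid 5 4)) s -> uniq (unzip1 s) ->
  perm_eq [seq pair_color (q :: s) | q <- grid 5 4 & q.1 \notin unzip1 s] colors.
Proof.
case: s => [|x1 [|x2 [|x3 []]]] // _ /and4P [g1 g2 g3 _].
by have := base_check_ok => /allP/(_ _ g1)/allP/(_ _ g2)/allP/(_ _ g3)/implyP.
Qed.

Lemma base_completing : completing 3 base_color.
Proof.
move=> A _ _ /cards3_set_seq [x1 [x2 [x3 [us ->]]]] /transverseP injS.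
set s := [:: x1; x2; x3]; set c := base_color A.
have unzip_s : unzip1 (map coords s) = map val (map fst s) by rewrite -!map_comp.
have groups (x : hpoint 5 4) :
    ((coords x).1 \in unzip1 (map coords s)) = (x.1 \in fst @: [set y in s]).
  by rewrite unzip_s (mem_map val_inj) mem_imset_set_seq.
have ug : uniq (unzip1 (map coords s)).
  rewrite unzip_s (map_inj_uniq val_inj) map_inj_in_uniq // => y z ys zs.
  by apply: injS; rewrite inE.
have gs : all (mem (grid 5 4)) (map coords s) by rewrite /= !coords_grid.
move: (@base_checkP (map coords s) erefl gs ug) => /permP /(_ (pred1 c)).
rewrite count_colors count_map count_filter count_grid.
have color_x x : x.1 \notin fst @: [set y in s] ->
    base_color (x |: [set y in s]) = pair_color (coords x :: map coords s).
  move=> xS; have -> : x |: [set y in s] = [set y in x :: s].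
    by apply/setP => y; rewrite !inE.
  by rewrite base_color_set_seq //= -[x \in s]inE (notin_groups xS).
apply: exists_unique_card1 => x; rewrite inE.
apply: (iffP andP) => [[/eqP cx gx] | [gx cx]].
  by rewrite -groups color_x -?groups.
by split; [apply/eqP; rewrite -color_x | rewrite groups].
Qed.

Theorem lemma11 (u : nat) (hu : 0 < u) :
  exists P : {set {set {set hpoint 5 (4 * u)}}}, @large_Hset 5 (4 * u) 4 3 P.
Proof.
exists (preim_partition (inflate (isT : 0 < 4) base_color) (transverse_ksets 5 (4 * u) 4)).
exact/large_Hset_completing/inflate_completing/base_completing.
Qed.
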